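(* Let $\{(x^k,y^k)\}$ be generated by the LSAAL algorithm described in the context, under the standing bounds (D2) and (D3). Then for $k=1,2,\dots$, $$\|x^{k+1}-x^k\|\le\sigma\Big\{[\kappa_f+\nu_g\kappa_g\sigma]+\kappa_g\|y^k\|\Big\}.$$
   Context: $\mathcal{Y}$ is a finite-dimensional Hilbert space, $\mathcal{K}\subset\mathcal{Y}$ a closed convex cone, $\mathcal{K}^\circ=\{v:\langle v,w\rangle\le0\ \forall w\in\mathcal{K}\}$ its polar cone, $\Pi_{\mathcal{K}^\circ}$ the metric projection onto $\mathcal{K}^\circ$. $X\subset\mathbb{R}^n$ is a nonempty convex compact set contained in an open convex set $\mathcal{O}$. $\xi$ is a random vector supported on $\Xi\subseteq\mathbb{R}^q$; $F:\mathcal{O}\times\Xi\to\mathbb{R}$, $G:\mathcal{O}\times\Xi\to\mathcal{Y}$ are, for every $\xi$, smooth in $x$, with gradient $\nabla_xF(x,\xi)$ and derivative $\mathrm{D}_xG(x,\xi)$. Samples $\xi_1,\xi_2,\dots$ of $\xi$ are given. (D2) There is $\nu_g>0$ with $\|G(x,\xi)\|\le\nu_g$ for all $x\in\mathcal{O}$ and all $\xi$. (D3) There are $\kappa_f,\kappa_g>0$ with $\|\nabla_xF(x,\xi)\|\le\kappa_f$ and $\|\mathrm{D}_xG(x,\xi)\|\le\kappa_g$ (operator norm) for all $x\in\mathcal{O}$ and all $\xi$. LSAAL algorithm: choose $x^1\in X$, $y^1=0$, $\sigma>0$. For $k=1,2,\dots$: $l_f^k(x)=F(x^k,\xi_k)+\langle\nabla_xF(x^k,\xi_k),x-x^k\rangle$,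 $l_g^k(x)=G(x^k,\xi_k)+\mathrm{D}_xG(x^k,\xi_k)(x-x^k)$, $l_\sigma^k(x,y)=l_f^k(x)+\frac{1}{2\sigma}[\|\Pi_{\mathcal{K}^\circ}(y+\sigma l_g^k(x))\|^2-\|y\|^2]$, $x^{k+1}=\mathrm{argmin}_{x\in X}\{l_\sigma^k(x,y^k)+\frac{1}{2\sigma}\|x-x^k\|^2\}$, $y^{k+1}=\Pi_{\mathcal{K}^\circ}(y^k+\sigma l_g^k(x^{k+1}))$. *)

From HB Require Import structures.
From mathcomp Require Import all_boot all_order all_algebra.
From mathcomp Require Import all_classical all_reals all_analysis.
Set Implicit Arguments. Unset Strict Implicit. Unset Printing Implicit Defensive.
Import Order.TTheory GRing.Theory Num.Theory.
Import numFieldNormedType.Exports.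
Local Open Scope classical_set_scope.
Local Open Scope ring_scope.

Definition dotv (R : realType) (n : nat) (u v : 'rV[R]_n) : R :=
  \sum_(i < n) u ord0 i * v ord0 i.

Definition enorm (R : realType) (n : nat) (u : 'rV[R]_n) : R :=
  Num.sqrt (dotv u u).

Definition closed_convex_cone (R : realType) (m : nat) (K : set 'rV[R]_m) : Prop :=
  [/\ K 0, (forall t w, 0 <= t -> K w -> K (t *: w)),
      (forall u v, K u -> K v -> K (u + v)) & closed K].

Definition polar_cone (R : realType) (m : nat) (K : set 'rV[R]_m) : set 'rV[R]_m :=
  [set v | forall w, K w -> dotv v w <= 0].

Definition is_metric_proj (R : realType) (m : nat) (C : set 'rV[R]_m)
  (v p : 'rV[R]_m) : Prop :=
  C p /\ forall w, C w -> enorm (v - p) <= enorm (v - w).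

Definition opnorm_le (R : realType) (n m : nat) (A : 'M[R]_(n, m)) (c : R) : Prop :=
  forall h : 'rV[R]_n, enorm (h *m A) <= c * enorm h.

Definition lin_f (R : realType) (n q : nat)
  (F : 'rV[R]_n -> 'rV[R]_q -> R) (gradF : 'rV[R]_n -> 'rV[R]_q -> 'rV[R]_n)
  (xk : 'rV[R]_n) (s : 'rV[R]_q) (z : 'rV[R]_n) : R :=
  F xk s + dotv (gradF xk s) (z - xk).

Definition lin_g (R : realType) (n m q : nat)
  (G : 'rV[R]_n -> 'rV[R]_q -> 'rV[R]_m) (DG : 'rV[R]_n -> 'rV[R]_q -> 'M[R]_(n, m))
  (xk : 'rV[R]_n) (s : 'rV[R]_q) (z : 'rV[R]_n) : 'rV[R]_m :=
  G xk s + (z - xk) *m DG xk s.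

Definition lin_aug_lag (R : realType) (n m q : nat) (sigma : R)
  (Pi : 'rV[R]_m -> 'rV[R]_m)
  (F : 'rV[R]_n -> 'rV[R]_q -> R) (gradF : 'rV[R]_n -> 'rV[R]_q -> 'rV[R]_n)
  (G : 'rV[R]_n -> 'rV[R]_q -> 'rV[R]_m) (DG : 'rV[R]_n -> 'rV[R]_q -> 'M[R]_(n, m))
  (xk : 'rV[R]_n) (s : 'rV[R]_q) (z : 'rV[R]_n) (y : 'rV[R]_m) : R :=
  lin_f F gradF xk s z
  + (2 * sigma)^-1 * (enorm (Pi (y + sigma *: lin_g G DG xk s z)) ^+ 2 - enorm y ^+ 2).

Definition LSAAL_iterates (R : realType) (n m q : nat) (sigma : R)
  (X : set 'rV[R]_n) (Pi : 'rV[R]_m -> 'rV[R]_m)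
  (F : 'rV[R]_n -> 'rV[R]_q -> R) (gradF : 'rV[R]_n -> 'rV[R]_q -> 'rV[R]_n)
  (G : 'rV[R]_n -> 'rV[R]_q -> 'rV[R]_m) (DG : 'rV[R]_n -> 'rV[R]_q -> 'M[R]_(n, m))
  (xi : nat -> 'rV[R]_q) (x : nat -> 'rV[R]_n) (y : nat -> 'rV[R]_m) : Prop :=
  [/\ X (x 1%N), y 1%N = 0 &
    forall k : nat, (1 <= k)%N ->
      [/\ X (x k.+1),
          (forall z, X z ->
             lin_aug_lag sigma Pi F gradF G DG (x k) (xi k) (x k.+1) (y k)
               + (2 * sigma)^-1 * enorm (x k.+1 - x k) ^+ 2
             <= lin_aug_lag sigma Pi F gradF G DG (x k) (xi k) z (y k)
               + (2 * sigma)^-1 * enorm (z - x k) ^+ 2)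
        & y k.+1 = Pi (y k + sigma *: lin_g G DG (x k) (xi k) (x k.+1))]].

(* The subproblem defining x^{k+1} is a prox step: x^{k+1} minimises over X the
   function l_sigma^k(., y^k) + |. - x^k|^2 / (2 sigma).  Here l_sigma^k(., y^k)
   is convex, because w |-> |Pi(w)|^2 = max_{u in K°} (2<u, w> - |u|^2) is a
   supremum of affine functions, with subgradient 2 Pi(w).  The three-point
   inequality of the prox step at x^k, together with this subgradient at x^k,
   gives, for d = x^{k+1} - x^k,
     |d|^2 / sigma <= - <grad F, d> - <Pi(y^k + sigma G), d DG>,
   and Cauchy-Schwarz, |Pi w| <= |w|, (D2) and (D3) bound the right-hand side
   by |d| (kappa_f + kappa_g (|y^k| + sigma nu_g)). *)

From HB Require Import structures.
From mathcomp Require Import all_boot all_order all_algebra.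
From mathcomp Require Import all_classical all_reals all_analysis.
From mathcomp Require Import ring lra.
Import Order.TTheory GRing.Theory Num.Theory.
Import numFieldNormedType.Exports.
Local Open Scope classical_set_scope.
Local Open Scope ring_scope.
Local Open Scope convex_scope.
Set Implicit Arguments. Unset Strict Implicit. Unset Printing Implicit Defensive.

Section EuclideanRowVectors.
Variables (R : realType) (n : nat).
Implicit Types u v w : 'rV[R]_n.

Lemma dotvC u v : dotv u v = dotv v u.
Proof. by apply: eq_bigr => i _; rewrite mulrC. Qed.

Lemma dotvDl u v w : dotv (u + v) w = dotv u w + dotv v w.
Proof. by rewrite /dotv -big_split; apply: eq_bigr => i _; rewrite mxE mulrDl. Qed.

Lemma dotvZl a u v : dotv (a *: u) v = a * dotv u v.
Proof. by rewrite /dotv mulr_sumr; apply: eq_bigr => i _; rewrite mxE mulrA. Qed.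

Lemma dotvNl u v : dotv (- u) v = - dotv u v.
Proof. by rewrite -scaleN1r dotvZl mulN1r. Qed.

Lemma dotvBl u v w : dotv (u - v) w = dotv u w - dotv v w.
Proof. by rewrite dotvDl dotvNl. Qed.

Lemma dotvDr u v w : dotv w (u + v) = dotv w u + dotv w v.
Proof. by rewrite dotvC dotvDl !(dotvC w). Qed.

Lemma dotvZr a u v : dotv v (a *: u) = a * dotv v u.
Proof. by rewrite dotvC dotvZl dotvC. Qed.

Lemma dotvNr u v : dotv v (- u) = - dotv v u.
Proof. by rewrite dotvC dotvNl dotvC. Qed.

Lemma dotvBr u v w : dotv w (u - v) = dotv w u - dotv w v.
Proof. by rewrite dotvDr dotvNr. Qed.

Lemma dotvv_ge0 u : 0 <= dotv u u.
Proof. by apply: sumr_ge0 => i _; rewrite -expr2 sqr_ge0. Qed.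

Lemma dotvv_eq0 u : (dotv u u == 0) = (u == 0).
Proof.
apply/idP/eqP => [|->]; last by rewrite /dotv big1 // => i _; rewrite mxE mul0r.
rewrite psumr_eq0 => [/allP u0|i _]; last by rewrite -expr2 sqr_ge0.
apply/rowP => i; rewrite mxE.
by apply/eqP; have /implyP := u0 i (mem_index_enum _); rewrite -expr2 sqrf_eq0; apply.
Qed.

Lemma enorm_ge0 u : 0 <= enorm u.
Proof. exact: sqrtr_ge0. Qed.

Lemma enorm_sqr u : enorm u ^+ 2 = dotv u u.
Proof. by rewrite /enorm sqr_sqrtr // dotvv_ge0. Qed.

Lemma enormZ a u : enorm (a *: u) = `|a| * enorm u.
Proof. by rewrite /enorm dotvZl dotvZr mulrA sqrtrM ?sqr_ge0 // -expr2 sqrtr_sqr. Qed.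

Lemma enormN u : enorm (- u) = enorm u.
Proof. by rewrite -scaleN1r enormZ normrN normr1 mul1r. Qed.

Lemma enormB u v : enorm (u - v) = enorm (v - u).
Proof. by rewrite -enormN opprB. Qed.

Lemma enorm0 : enorm (0 : 'rV[R]_n) = 0.
Proof. by rewrite -(scale0r 0) enormZ normr0 mul0r. Qed.

Lemma dotv0l v : dotv 0 v = 0.
Proof. by rewrite -(scale0r (0 : 'rV[R]_n)) dotvZl mul0r. Qed.

Lemma dotv0r v : dotv v 0 = 0.
Proof. by rewrite dotvC dotv0l. Qed.

Lemma enorm_gt0 u : (0 < enorm u) = (u != 0).
Proof. by rewrite /enorm sqrtr_gt0 lt_def dotvv_eq0 dotvv_ge0 andbT. Qed.

Lemma dotv_le_enorm u v : dotv u v <= enorm u * enorm v.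
Proof.
have [->|u0] := eqVneq u 0; first by rewrite dotv0l mulr_ge0 ?enorm_ge0.
have [->|v0] := eqVneq v 0; first by rewrite dotv0r mulr_ge0 ?enorm_ge0.
have := dotvv_ge0 (enorm v *: u - enorm u *: v).
rewrite !(dotvBl, dotvBr, dotvZl, dotvZr) -!enorm_sqr (dotvC v u).
have a0 : 0 < enorm u by rewrite enorm_gt0.
have b0 : 0 < enorm v by rewrite enorm_gt0.
move: (enorm u) (enorm v) (dotv u v) a0 b0 => a b c a0 b0 h.
have ab0 : 0 < a * b by rewrite mulr_gt0.
have : 0 <= (a * b) * (a * b - c) by nra.
by rewrite pmulr_rge0 // subr_ge0.
Qed.

Lemma ler_enormD u v : enorm (u + v) <= enorm u + enorm v.
Proof.
rewrite -(ler_pXn2r (_ : (0 < 2)%N)) ?nnegrE ?addr_ge0 ?enorm_ge0 //.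
rewrite enorm_sqr dotvDl !dotvDr (dotvC v u) sqrrD -!enorm_sqr.
have := dotv_le_enorm u v; lra.
Qed.

Lemma enorm_sqr_conv t u v :
  enorm (t *: u + (1 - t) *: v) ^+ 2 =
  t * enorm u ^+ 2 + (1 - t) * enorm v ^+ 2 - t * (1 - t) * enorm (u - v) ^+ 2.
Proof.
rewrite !enorm_sqr !(dotvDl, dotvDr, dotvNl, dotvNr, dotvZl, dotvZr) (dotvC v u).
ring.
Qed.

End EuclideanRowVectors.

Lemma ler_addscale01P (R : realFieldType) (x y e : R) : 0 <= e ->
  reflect (forall t, 0 < t <= 1 -> x <= y + t * e) (x <= y).
Proof.
move=> e0; apply: (iffP idP) => [xy t /andP[t0 _]|H].
  by rewrite (le_trans xy) // lerDl mulr_ge0 // ltW.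
apply/ler_addgt0Pr => d d0.
have de0 : 0 < d + e by rewrite ltr_wpDr.
have t01 : 0 < d / (d + e) <= 1 by rewrite divr_gt0 // ler_pdivrMr // mul1r lerDl.
apply: le_trans (H _ t01) _; rewrite lerD2l mulrAC ler_pdivrMr // ler_pM2l //.
by rewrite lerDr ltW.
Qed.

Lemma polar_coneZ (R : realType) (m : nat) (K : set 'rV[R]_m) t p :
  0 <= t -> polar_cone K p -> polar_cone K (t *: p).
Proof. by move=> t0 Kp w Kw; rewrite dotvZl mulr_ge0_le0 // Kp. Qed.

Section PolarProjection.
Variables (R : realType) (m : nat) (K : set 'rV[R]_m) (Pi : 'rV[R]_m -> 'rV[R]_m).
Hypothesis Pi_proj : forall v, is_metric_proj (polar_cone K) v (Pi v).

Lemma proj_polar w : polar_cone K (Pi w).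
Proof. by case: (Pi_proj w). Qed.

Lemma proj_sqr_min w u : polar_cone K u ->
  enorm (w - Pi w) ^+ 2 <= enorm (w - u) ^+ 2.
Proof.
case: (Pi_proj w) => _ /[apply] min_w.
by rewrite (ler_pXn2r (_ : (0 < 2)%N)) ?nnegrE ?enorm_ge0.
Qed.

Lemma dotv_proj w : dotv (Pi w) w = enorm (Pi w) ^+ 2.
Proof.
(* t *: Pi w lies in K° for t >= 0, so t |-> |w - t Pi w|^2 is minimal at t = 1. *)
set p := Pi w; rewrite enorm_sqr.
have expand t : enorm (w - t *: p) ^+ 2 =
    dotv w w - 2 * t * dotv p w + t ^+ 2 * dotv p p.
  by rewrite enorm_sqr !(dotvBl, dotvBr, dotvZl, dotvZr) (dotvC w p); ring.
have min_t t : 0 <= t -> - 2 * dotv p w + dotv p p <=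
    - 2 * t * dotv p w + t ^+ 2 * dotv p p.
  move=> t0; have := proj_sqr_min w (polar_coneZ t0 (proj_polar w)).
  by have := expand 1; rewrite scale1r => ->; rewrite expand; lra.
have [p0|p_neq0] := eqVneq p 0; first by rewrite p0 dotv0l dotv0r.
have b0 : 0 < dotv p p by rewrite lt_def dotvv_eq0 p_neq0 dotvv_ge0.
have a0 : 0 <= dotv p w by have := min_t 0 (lexx 0); nra.
have := min_t _ (divr_ge0 a0 (ltW b0)).
have : dotv p w / dotv p p * dotv p p = dotv p w by rewrite divfK // gt_eqF.
move: (dotv p w) (dotv p p) b0 => a b b0 ab_b h; have : (a - b) ^+ 2 <= 0 by nra.
by rewrite le_eqVlt ltNge sqr_ge0 orbF sqrf_eq0 subr_eq0 => /eqP.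
Qed.

Lemma proj_sqr_ge w u : polar_cone K u ->
  2 * dotv u w - enorm u ^+ 2 <= enorm (Pi w) ^+ 2.
Proof.
move=> Ku; have := proj_sqr_min w Ku.
rewrite !enorm_sqr !(dotvBl, dotvBr) (dotvC w (Pi w)) (dotvC w u) -enorm_sqr dotv_proj.
rewrite !enorm_sqr; lra.
Qed.

Lemma proj_sqr_subgrad w0 w :
  enorm (Pi w0) ^+ 2 + 2 * dotv (Pi w0) (w - w0) <= enorm (Pi w) ^+ 2.
Proof. by have := proj_sqr_ge w (proj_polar w0); rewrite dotvBr dotv_proj; lra. Qed.

Lemma proj_sqr_conv t w1 w2 : 0 <= t <= 1 ->
  enorm (Pi (t *: w1 + (1 - t) *: w2)) ^+ 2
    <= t * enorm (Pi w1) ^+ 2 + (1 - t) * enorm (Pi w2) ^+ 2.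
Proof.
case/andP=> t0 t1; set wt := _ + _.
have := ler_wpM2l t0 (proj_sqr_ge w1 (proj_polar wt)).
have := ler_wpM2l (eqbRL (subr_ge0 _ _) t1) (proj_sqr_ge w2 (proj_polar wt)).
have : dotv (Pi wt) wt = t * dotv (Pi wt) w1 + (1 - t) * dotv (Pi wt) w2.
  by rewrite /wt dotvDr !dotvZr.
rewrite dotv_proj; lra.
Qed.

Lemma enorm_proj_le w : enorm (Pi w) <= enorm w.
Proof.
have [->|p0] := eqVneq (Pi w) 0; first by rewrite enorm0 enorm_ge0.
have := dotv_le_enorm (Pi w) w; rewrite dotv_proj expr2 ler_pM2l //.
by rewrite enorm_gt0.
Qed.

End PolarProjection.

Lemma prox_three_point (R : realType) (n : nat) (X : set 'rV[R]_n)
    (psi : 'rV[R]_n -> R) (c : R) (x0 xs z : 'rV[R]_n) :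
  convex_set X -> convex_function X psi -> 0 <= c -> X xs -> X z ->
  (forall w, X w ->
     psi xs + c * enorm (xs - x0) ^+ 2 <= psi w + c * enorm (w - x0) ^+ 2) ->
  psi xs + c * enorm (xs - x0) ^+ 2 + c * enorm (z - xs) ^+ 2
    <= psi z + c * enorm (z - x0) ^+ 2.
Proof.
move=> convX convex_psi c0 Xxs Xz xs_min.
have cD0 : 0 <= c * enorm (z - xs) ^+ 2 by rewrite mulr_ge0 ?sqr_ge0.
apply/(ler_addscale01P _ _ cD0) => t /andP[t0 t1].
pose tt := Itv01 (ltW t0) t1; pose wt := (z : convex_lmodType 'rV[R]_n) <| tt |> xs.
have Xwt : X wt by rewrite -inE; apply: convX; rewrite inE.
have psi_wt : psi wt <= t * psi z + (1 - t) * psi xs.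
  by have := convex_psi tt z xs; rewrite !inE => /(_ Xz Xxs).
have wtE : wt = t *: z + (1 - t) *: xs by [].
have dist_wt : enorm (wt - x0) ^+ 2 = t * enorm (z - x0) ^+ 2
    + (1 - t) * enorm (xs - x0) ^+ 2 - t * (1 - t) * enorm (z - xs) ^+ 2.
  have -> : wt - x0 = t *: (z - x0) + (1 - t) *: (xs - x0).
    by rewrite wtE; apply/rowP => i; rewrite !mxE; ring.
  by rewrite (enorm_sqr_conv t (z - x0)) opprB addrA subrK.
have := xs_min _ Xwt; rewrite dist_wt => min_wt.
rewrite -(ler_pM2l t0); nra.
Qed.

Lemma convex_functionS (R : realType) (n : nat) (D E : set 'rV[R]_n)
    (f : 'rV[R]_n -> R) :
  D `<=` E -> convex_function E f -> convex_function D f.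
Proof.
by move=> DE convf t u v; rewrite !inE => Du Dv; apply: convf; rewrite inE; apply: DE.
Qed.

Section LinearizedSubproblem.
Variables (R : realType) (n m q : nat) (K : set 'rV[R]_m) (Pi : 'rV[R]_m -> 'rV[R]_m).
Hypothesis Pi_proj : forall v, is_metric_proj (polar_cone K) v (Pi v).
Variables (sigma : R) (F : 'rV[R]_n -> 'rV[R]_q -> R)
  (gradF : 'rV[R]_n -> 'rV[R]_q -> 'rV[R]_n) (G : 'rV[R]_n -> 'rV[R]_q -> 'rV[R]_m)
  (DG : 'rV[R]_n -> 'rV[R]_q -> 'M[R]_(n, m))
  (xk : 'rV[R]_n) (s : 'rV[R]_q) (y : 'rV[R]_m).
Hypothesis sigma_gt0 : 0 < sigma.

Local Notation L z := (lin_aug_lag sigma Pi F gradF G DG xk s z y).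

Let c_ge0 : 0 <= (2 * sigma)^-1.
Proof. by rewrite invr_ge0 mulr_ge0 // ltW. Qed.

Let c_2sigma : (2 * sigma)^-1 * (2 * sigma) = 1.
Proof. by rewrite mulVf // gt_eqF // mulr_gt0. Qed.

Lemma lin_aug_lag_conv t z1 z2 : 0 <= t <= 1 ->
  L (t *: z1 + (1 - t) *: z2) <= t * L z1 + (1 - t) * L z2.
Proof.
move=> t01; have /andP[t0 t1] := t01.
have ztE : t *: z1 + (1 - t) *: z2 - xk = t *: (z1 - xk) + (1 - t) *: (z2 - xk).
  by apply/rowP => i; rewrite !mxE; ring.
set W := fun z => y + sigma *: lin_g G DG xk s z.
have WE : W (t *: z1 + (1 - t) *: z2) = t *: W z1 + (1 - t) *: W z2.
  rewrite /W /lin_g ztE mulmxDl -!scalemxAl.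
  move: (G xk s) ((z1 - xk) *m _) ((z2 - xk) *m _) => g a b.
  by apply/rowP => i; rewrite !mxE; ring.
have := proj_sqr_conv Pi_proj (W z1) (W z2) t01; rewrite -WE.
have gradE : dotv (gradF xk s) (t *: z1 + (1 - t) *: z2 - xk)
    = t * dotv (gradF xk s) (z1 - xk) + (1 - t) * dotv (gradF xk s) (z2 - xk).
  by rewrite ztE dotvDr !dotvZr.
rewrite /lin_aug_lag /lin_f -/(W z1) -/(W z2) -/(W (_ + _)) gradE.
move=> /(ler_wpM2l c_ge0); nra.
Qed.

Lemma lin_aug_lag_convex : convex_function setT (fun z => L z).
Proof. by move=> t z1 z2 _ _; apply: lin_aug_lag_conv; rewrite ge0 le1. Qed.

Lemma lin_aug_lag_subgrad z :
  dotv (gradF xk s) (z - xk) + dotv (Pi (y + sigma *: G xk s)) ((z - xk) *m DG xk s)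
    <= L z - L xk.
Proof.
set W0 := y + sigma *: G xk s; set M := (z - xk) *m DG xk s.
have := proj_sqr_subgrad Pi_proj W0 (W0 + sigma *: M).
have e : (2 * sigma)^-1 * (2 * (sigma * dotv (Pi W0) M)) = dotv (Pi W0) M.
  by rewrite !mulrA -(mulrA _ 2) c_2sigma mul1r.
rewrite [W0 + _ - _]addrC addKr dotvZr => /(ler_wpM2l c_ge0).
rewrite mulrDr e /lin_aug_lag /lin_f /lin_g subrr mul0mx addr0 dotv0r addr0.
rewrite scalerDr addrA -/W0; lra.
Qed.

Section ProxStep.
Variables (X : set 'rV[R]_n) (x1 : 'rV[R]_n).
Hypotheses (convX : convex_set X) (Xxk : X xk) (Xx1 : X x1).
Hypothesis x1_min : forall z, X z ->
  L x1 + (2 * sigma)^-1 * enorm (x1 - xk) ^+ 2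
    <= L z + (2 * sigma)^-1 * enorm (z - xk) ^+ 2.

Lemma prox_step_sqr_le :
  enorm (x1 - xk) ^+ 2 <= - sigma * (dotv (gradF xk s) (x1 - xk)
    + dotv (Pi (y + sigma *: G xk s)) ((x1 - xk) *m DG xk s)).
Proof.
have := prox_three_point convX (convex_functionS (@subsetT _ X) lin_aug_lag_convex)
  c_ge0 Xx1 Xxk x1_min.
rewrite subrr enorm0 expr0n mulr0 addr0 enormB.
have := lin_aug_lag_subgrad x1.
set N2 := enorm _ ^+ 2; set S := _ + _ => subgrad three_point.
have -> : N2 = sigma * (2 * ((2 * sigma)^-1 * N2)).
  by rewrite mulrA mulrCA mulrA [2 * _]mulrC -(mulrA _ 2) c_2sigma mul1r.
by rewrite mulNr -mulrN ler_pM2l //; lra.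
Qed.

Lemma prox_step_le (kappa_f kappa_g nu_g : R) :
  enorm (gradF xk s) <= kappa_f -> opnorm_le (DG xk s) kappa_g ->
  enorm (G xk s) <= nu_g -> 0 <= kappa_g ->
  enorm (x1 - xk) <= sigma * ((kappa_f + nu_g * kappa_g * sigma) + kappa_g * enorm y).
Proof.
move=> gradF_le DG_le G_le kg0.
set d := x1 - xk; set N := enorm d; set W0 := y + sigma *: G xk s.
have N0 : 0 <= N := enorm_ge0 d.
have grad_term : - dotv (gradF xk s) d <= kappa_f * N.
  have := dotv_le_enorm (- gradF xk s) d; rewrite dotvNl enormN => /le_trans; apply.
  by rewrite ler_wpM2r.
have proj_term :
    - dotv (Pi W0) (d *m DG xk s) <= (enorm y + sigma * nu_g) * (kappa_g * N).
  have := dotv_le_enorm (- Pi W0) (d *m DG xk s).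
  rewrite dotvNl enormN => /le_trans; apply.
  apply: ler_pM (enorm_ge0 _) (enorm_ge0 _) _ (DG_le d).
  apply: le_trans (enorm_proj_le Pi_proj W0) _; apply: le_trans (ler_enormD _ _) _.
  by rewrite enormZ gtr0_norm // lerD2l ler_wpM2l // ltW.
set Q := sigma * _.
have sq_le : N ^+ 2 <= N * Q.
  apply: le_trans prox_step_sqr_le _; rewrite -/d -/N -/W0 mulNr -mulrN opprD.
  by rewrite /Q mulrCA ler_pM2l //; lra.
have : 0 <= Q.
  rewrite mulr_ge0 ?addr_ge0 ?mulr_ge0 ?enorm_ge0 ?(ltW sigma_gt0) //.
  - exact: le_trans (enorm_ge0 _) gradF_le.
  - exact: le_trans (enorm_ge0 _) G_le.
nra.
Qed.

End ProxStep.

End LinearizedSubproblem.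

Lemma LSAAL_iterates_in (R : realType) (n m q : nat) (sigma : R) (X : set 'rV[R]_n)
    (Pi : 'rV[R]_m -> 'rV[R]_m) F gradF G DG (xi : nat -> 'rV[R]_q) x y :
  LSAAL_iterates sigma X Pi F gradF G DG xi x y -> forall k, (1 <= k)%N -> X (x k).
Proof. by case=> X1 _ step [|[|k]] // _; case: (step k.+1). Qed.

Theorem corollary3p1 (R : realType) (n m q : nat)
  (K : set 'rV[R]_m) (Pi : 'rV[R]_m -> 'rV[R]_m)
  (X O : set 'rV[R]_n) (Xi : set 'rV[R]_q)
  (F : 'rV[R]_n -> 'rV[R]_q -> R) (gradF : 'rV[R]_n -> 'rV[R]_q -> 'rV[R]_n)
  (G : 'rV[R]_n -> 'rV[R]_q -> 'rV[R]_m) (DG : 'rV[R]_n -> 'rV[R]_q -> 'M[R]_(n, m))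
  (xi : nat -> 'rV[R]_q) (sigma nu_g kappa_f kappa_g : R)
  (x : nat -> 'rV[R]_n) (y : nat -> 'rV[R]_m) :
  closed_convex_cone K ->
  (forall v, is_metric_proj (polar_cone K) v (Pi v)) ->
  X !=set0 -> convex_set X -> compact X ->
  open O -> convex_set O -> X `<=` O ->
  (forall s, Xi s -> forall z, O z ->
     differentiable (fun w => F w s) z /\
     'd (fun w => F w s) z = (fun h => dotv (gradF z s) h) :> ('rV[R]_n -> R)) ->
  (forall s, Xi s -> forall z, O z ->
     differentiable (fun w => G w s) z /\
     'd (fun w => G w s) z = (fun h => h *m DG z s) :> ('rV[R]_n -> 'rV[R]_m)) ->
  (forall s, Xi s -> {in O, continuous (fun w => gradF w s)}) ->
  (forall s, Xi s -> {in O, continuous (fun w => DG w s)}) ->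
  (forall k, Xi (xi k)) ->
  0 < sigma ->
  0 < nu_g -> (forall s, Xi s -> forall z, O z -> enorm (G z s) <= nu_g) ->
  0 < kappa_f -> 0 < kappa_g ->
  (forall s, Xi s -> forall z, O z ->
     enorm (gradF z s) <= kappa_f /\ opnorm_le (DG z s) kappa_g) ->
  LSAAL_iterates sigma X Pi F gradF G DG xi x y ->
  forall k : nat, (1 <= k)%N ->
    enorm (x k.+1 - x k)
      <= sigma * ((kappa_f + nu_g * kappa_g * sigma) + kappa_g * enorm (y k)).
Proof.
move=> _ Pi_proj _ convX _ _ _ XO _ _ _ _ xi_in sigma_gt0 _ G_le _ kg_gt0 bounds.
move=> iter k k1.
have Xk := LSAAL_iterates_in iter k1.
have [_ _ /(_ k k1) [Xk1 x1_min _]] := iter.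
have [gradF_le DG_le] := bounds _ (xi_in k) _ (XO _ Xk).
have G_le_k := G_le _ (xi_in k) _ (XO _ Xk).
exact: (prox_step_le Pi_proj sigma_gt0 convX Xk Xk1 x1_min
  gradF_le DG_le G_le_k (ltW kg_gt0)).
Qed.
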